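(* Let $V$ be a vector space over $\mathbb{F}_2$ and let $\xi\in\mathbb{F}_2[V]$ be nonzero, with $d=|D(\xi)|$. (i) If $\xi\in I[V]$, then $d\geq 2$ and there are $1$-fold Pfister elements $\pi_1,\ldots,\pi_p$ with $\xi=\pi_1+\cdots+\pi_p$ and $p\leq d$; if moreover $0\in D(\xi)$, such a decomposition exists with $p\leq d-1$. (ii) If $\xi\in I[V]$ and $\varepsilon_1(\xi)=0$, then $d\geq 4$ and there are $2$-fold Pfister elements $\pi_1,\ldots,\pi_p$ with $\xi=\pi_1+\cdots+\pi_p$ and $p\leq d-2$; if moreover $0\in D(\xi)$, such a decomposition exists with $p\leq d-3$.
   Context: For an $\mathbb{F}_2$-vector space $V$, $\mathbb{F}_2[V]$ is the group algebra, whose elements are finite sums $\sum_{v\in V}\alpha_vX^v$ ($\alpha_v\in\mathbb{F}_2$), with $X^0=1$ and $X^uX^v=X^{u+v}$. Define group homomorphisms $\varepsilon_0:\mathbb{F}_2[V]\to\mathbb{F}_2$, $\varepsilon_0(\sum\alpha_vX^v)=\sum\alpha_v$ (augmentation), and $\varepsilon_1:\mathbb{F}_2[V]\to V$, $\varepsilon_1(\sum\alpha_vX^v)=\sum\alpha_v v$. $I[V]=\ker\varepsilon_0$. For $m\geq1$, an $m$-fold Pfister element is a product $(1+X^{v_1})\cdots(1+X^{v_m})$ with $v_1,\ldots,v_m\in V$ (so $0$ is an $m$-fold Pfister element). The support of $\xi=\sum\alpha_vX^v$ is $D(\xi)=\{v\in V\mid \alpha_v=1\}$. *)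

From HB Require Import structures.
From mathcomp Require Import all_boot all_order all_algebra.
From mathcomp Require Import finmap.
Set Implicit Arguments. Unset Strict Implicit. Unset Printing Implicit Defensive.
Import GRing.Theory.
Local Open Scope ring_scope.
Local Open Scope fset_scope.

(* An element  xi = \sum_v alpha_v X^v  of the group algebra F_2[V]
   (alpha_v in F_2, finitely many nonzero) is represented by the finite set
   of those v with alpha_v = 1, i.e. by its support D(xi); this is a
   bijection between F_2[V] and the finite subsets of V. *)
Definition grpalg (V : lmodType 'F_2) := {fset V}.

Section GroupAlgebra.
Variable V : lmodType 'F_2.

Definition coef (xi : grpalg V) (v : V) : 'F_2 := (v \in xi)%:R.

Definition supp (xi : grpalg V) : {fset V} := xi.

Definition ga0 : grpalg V := fset0.
Definition gaX (v : V) : grpalg V := [fset v].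
Definition ga1 : grpalg V := gaX 0.

(* addition: coefficientwise sum in F_2 = symmetric difference of supports *)
Definition gaadd (xi eta : grpalg V) : grpalg V :=
  (xi `\` eta) `|` (eta `\` xi).

(* multiplication: bilinear extension of X^u X^v = X^(u+v); the coefficient
   of X^w in xi*eta is the parity of #{(u,v) in D(xi) x D(eta) | u+v = w}
   = #{u in D(xi) | w - u in D(eta)}. *)
Definition gamul (xi eta : grpalg V) : grpalg V :=
  [fset w in [fset (u + v)%R | u in xi, v in eta]
     | odd #|` [fset u in xi | (w - u)%R \in eta]|].

Definition eps0 (xi : grpalg V) : 'F_2 := \sum_(v <- xi) (1 : 'F_2).
Definition eps1 (xi : grpalg V) : V := \sum_(v <- xi) v.

Definition in_I (xi : grpalg V) : Prop := eps0 xi = 0.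

Definition pf1 (v : V) : grpalg V := gaadd ga1 (gaX v).
Definition pf2 (u v : V) : grpalg V := gamul (pf1 u) (pf1 v).

Definition gasum (s : seq (grpalg V)) : grpalg V := foldr gaadd ga0 s.

End GroupAlgebra.

From HB Require Import structures.
From mathcomp Require Import all_boot all_order all_algebra.
From mathcomp Require Import finmap.
From mathcomp Require Import zify.
Local Open Scope fset_scope.
Import GRing.Theory.

(* An element of I[V] has an even support D, and it is the sum of the 1 + X^v
   over the nonzero v in D: each such term contributes X^v, and the even number
   of them contributes X^0 an even number of times.  If moreover eps_1 = 0, list
   these v as a_0, ..., a_k; since a_k = a_0 + ... + a_(k-1) and
   (1 + X^u)(1 + X^v) = (1 + X^u) + (1 + X^v) + (1 + X^(u+v)), the sum of the
   1 + X^(a_i) is the telescoping sum of the 2-fold Pfister elements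
   (1 + X^(a_0 + ... + a_(i-1)))(1 + X^(a_i)), 1 <= i < k.  The bound d >= 4
   holds because a support {a, b} with a + b = 0 would force a = b. *)

Lemma big_addb_odd (T : Type) (s : seq T) (P : pred T) :
  \big[addb/false]_(x <- s) P x = odd (count P s).
Proof.
elim: s => [|x s IH]; first by rewrite big_nil.
by rewrite big_cons IH /= oddD; case: (P x).
Qed.

Section GroupAlgebraF2.
Local Open Scope ring_scope.
Context {V : lmodType 'F_2}.
Implicit Types (u v w : V) (xi eta : grpalg V).

Lemma addvv v : v + v = 0.
Proof.
by rewrite -{1 2}[v]scale1r -scalerDl (_ : 1 + 1 = 0) ?scale0r //; apply/eqP.
Qed.

Lemma oppv v : - v = v.
Proof. by apply/eqP; rewrite eq_sym -subr_eq0 opprK addvv. Qed.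

Lemma mem_gaadd xi eta w : (w \in gaadd xi eta) = (w \in xi) (+) (w \in eta).
Proof.
by rewrite /gaadd in_fsetU !in_fsetD; case: (w \in xi); case: (w \in eta).
Qed.

Lemma gaaddA : associative (@gaadd V).
Proof.
by move=> xi eta zeta; apply/fsetP => w; rewrite !mem_gaadd addbA.
Qed.

Lemma gasum_rcons (s : seq (grpalg V)) xi :
  gasum (rcons s xi) = gaadd (gasum s) xi.
Proof.
elim: s => [|eta s IH] /=; last by rewrite IH gaaddA.
by apply/fsetP => w; rewrite !mem_gaadd addbC.
Qed.

Lemma mem_gasum (s : seq (grpalg V)) w :
  (w \in gasum s) = \big[addb/false]_(xi <- s) (w \in xi).
Proof.
elim: s => [|xi s IH]; first by rewrite big_nil.
by rewrite big_cons /= mem_gaadd IH.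
Qed.

Lemma mem_gamul xi eta w :
  (w \in gamul xi eta) = \big[addb/false]_(u <- xi) (w - u \in eta).
Proof.
rewrite /gamul in_fset /= inE /= big_addb_odd.
have -> : #|` [fset u | u in xi & w - u \in eta]| = count (fun u => w - u \in eta) xi.
  rewrite -size_filter; apply/perm_size/uniq_perm.
  - exact: fset_uniq.
  - exact/filter_uniq/fset_uniq.
  - by move=> u; rewrite mem_filter inE /= andbC.
case: (boolP (odd _)) => odd_cnt; rewrite ?andbT ?andbF //.
have /hasP[u xi_u eta_wu] : has (fun u => w - u \in eta) xi.
  by rewrite has_count; case: (count _ _) odd_cnt.
by apply/imfset2P; exists u => //; exists (w - u); rewrite // addrC subrK.
Qed.

Lemma mem_pf1 v w : (w \in pf1 v) = (w == 0) (+) (w == v).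
Proof. by rewrite /pf1 mem_gaadd /ga1 /gaX !in_fset1. Qed.

Lemma big_addb_pf1 (F : V -> bool) v :
  \big[addb/false]_(u <- pf1 v) F u = F 0 (+) F v.
Proof.
have [->|v_neq0] := eqVneq v 0.
  have -> : pf1 0 = fset0 :> {fset V}.
    by apply/fsetP => w; rewrite mem_pf1 addbb in_fset0.
  by rewrite big_seq_fset0 addbb.
rewrite (perm_big [:: 0; v]) /=; first by rewrite !big_cons big_nil addbF.
apply: uniq_perm; first exact: fset_uniq.
  by rewrite /= inE andbT eq_sym.
move=> w; rewrite mem_pf1 !inE.
by have [->|] := eqVneq w 0; rewrite //= eq_sym (negbTE v_neq0).
Qed.

Lemma pf2E u v : pf2 u v = gaadd (gaadd (pf1 u) (pf1 v)) (pf1 (u + v)).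
Proof.
apply/fsetP => w.
rewrite /pf2 mem_gamul big_addb_pf1 !mem_gaadd /ga1 /gaX !in_fset1.
rewrite subr0 subr_eq0 subr_eq (addrC v u).
by case: (w == 0); case: (w == u); case: (w == v); case: (w == u + v).
Qed.

Fixpoint partial_sum_pairs (acc : V) (r : seq V) : seq (V * V) :=
  if r is v :: r' then (acc, v) :: partial_sum_pairs (acc + v) r' else [::].

Lemma size_partial_sum_pairs acc r : size (partial_sum_pairs acc r) = size r.
Proof. by elim: r acc => [|v r IH] acc //=; rewrite IH. Qed.

Lemma gasum_pf2_partial_sum_pairs acc r :
  gasum [seq pf2 p.1 p.2 | p <- partial_sum_pairs acc r] =
  gaadd (gaadd (pf1 acc) (gasum [seq pf1 v | v <- r]))
        (pf1 (acc + \sum_(v <- r) v)).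
Proof.
elim: r acc => [|v r IH] acc /=; apply/fsetP => w.
  by rewrite big_nil addr0 !mem_gaadd in_fset0 addbF addbb.
rewrite mem_gaadd IH pf2E big_cons addrA.
(* [pf1] unfolds to a [gaadd], so the summands are abstracted before [mem_gaadd]. *)
move: (pf1 acc) (pf1 v) (pf1 (acc + v)) (pf1 (acc + v + \sum_(v <- r) v))
  (gasum [seq pf1 v | v <- r]) => A B C D G.
by rewrite !mem_gaadd; case: (w \in A); case: (w \in B); case: (w \in C);
  case: (w \in D); case: (w \in G).
Qed.

Lemma gasum_pf1_as_pf2 {s : seq V} :
  (2 <= size s)%N -> \sum_(v <- s) v = 0 ->
  exists2 uv : seq (V * V), size uv = (size s - 2)%N &
    gasum [seq pf2 p.1 p.2 | p <- uv] = gasum [seq pf1 v | v <- s].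
Proof.
case: s => [|a [|b s]] // _; case/lastP E: (b :: s) => [|m z] //.
rewrite big_cons big_rcons => /eqP; rewrite addrA addr_eq0 oppv => /eqP z_sum.
exists (partial_sum_pairs a m).
  by rewrite size_partial_sum_pairs /= size_rcons subn2.
by rewrite gasum_pf2_partial_sum_pairs z_sum /= map_rcons gasum_rcons gaaddA.
Qed.

Lemma eps0_odd xi : eps0 xi = (odd #|` xi|)%:R.
Proof.
rewrite /eps0; elim: (enum_fset xi) => [|x s IH]; first by rewrite big_nil.
rewrite big_cons IH /=; case: (odd (size s)) => /=; last by rewrite addr0.
by apply/eqP.
Qed.

Lemma in_I_even {xi} : in_I xi -> ~~ odd #|` xi|.
Proof. by rewrite /in_I eps0_odd; case: (odd _). Qed.

Definition nonzero_supp xi : seq V := [seq v <- enum_fset xi | v != 0].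

Lemma size_nonzero_supp xi : (size (nonzero_supp xi) + (0%R \in xi))%N = #|` xi|.
Proof.
rewrite size_filter -(count_uniq_mem (0 : V) (fset_uniq xi)) addnC.
by rewrite -(count_predC (pred1 (0 : V))).
Qed.

Lemma sum_nonzero_supp xi : \sum_(v <- nonzero_supp xi) v = eps1 xi.
Proof.
rewrite big_filter big_mkcond /eps1; apply: eq_bigr => v _.
by case: (eqVneq v 0).
Qed.

Lemma gasum_pf1_nonzero_supp xi :
  ~~ odd #|` xi| -> gasum [seq pf1 v | v <- nonzero_supp xi] = xi.
Proof.
move=> xi_even; apply/fsetP => w.
rewrite mem_gasum big_map big_filter big_mkcond /=.
rewrite (eq_bigr (fun v => (w == 0) (+) (v == w))); last first.
  move=> v _; rewrite mem_pf1 (eq_sym w v).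
  by have [->|] := eqVneq v 0; rewrite //= eq_sym addbb.
rewrite big_split /= !big_addb_odd count_uniq_mem ?fset_uniq // oddb.
by case: (w == 0); rewrite ?count_pred0 ?count_predT /= ?(negbTE xi_even).
Qed.

Lemma in_I_card_ge2 {xi} : xi <> ga0 V -> in_I xi -> (2 <= #|` xi|)%N.
Proof.
move=> xi_neq0 /in_I_even; have : (0 < #|` xi|)%N by rewrite cardfs_gt0; apply/eqP.
by case: #|` xi| => [|[|n]].
Qed.

Lemma in_I_eps1_card_ge4 {xi} :
  xi <> ga0 V -> in_I xi -> eps1 xi = 0 -> (4 <= #|` xi|)%N.
Proof.
move=> xi_neq0 xiI; have := in_I_card_ge2 xi_neq0 xiI; have := in_I_even xiI.
rewrite /eps1; have := fset_uniq xi.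
case: (enum_fset xi) => [|a [|b [|c s]]] //=; last by case: (size s) => [|[]].
rewrite !big_cons big_nil addr0 inE => /andP[a_notin_b _] _ _ /eqP.
by rewrite addr_eq0 oppv => /eqP a_eq_b; rewrite a_eq_b eqxx in a_notin_b.
Qed.

Lemma pf1_decomposition {xi} :
  in_I xi -> exists2 vs : seq V,
    xi = gasum [seq pf1 v | v <- vs] & (size vs + (0%R \in xi))%N = #|` xi|.
Proof.
move=> /in_I_even xi_even; exists (nonzero_supp xi).
  by rewrite gasum_pf1_nonzero_supp.
exact: size_nonzero_supp.
Qed.

Lemma pf2_decomposition {xi} :
  xi <> ga0 V -> in_I xi -> eps1 xi = 0 -> exists2 uv : seq (V * V),
    xi = gasum [seq pf2 p.1 p.2 | p <- uv] & (size uv + 2 + (0%R \in xi))%N = #|` xi|.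
Proof.
move=> xi_neq0 xiI xi_eps1.
have card_ge4 := in_I_eps1_card_ge4 xi_neq0 xiI xi_eps1.
have size_s := size_nonzero_supp xi.
have size_s_ge2 : (2 <= size (nonzero_supp xi))%N.
  by move: card_ge4; rewrite -size_s; case: (0%R \in xi) => /=; lia.
have [uv size_uv uvE] :=
  gasum_pf1_as_pf2 size_s_ge2 (etrans (sum_nonzero_supp xi) xi_eps1).
exists uv; first by rewrite uvE gasum_pf1_nonzero_supp ?in_I_even.
by rewrite size_uv subnK.
Qed.

End GroupAlgebraF2.

Theorem lemma1p1 (V : lmodType 'F_2) (xi : grpalg V) :
  xi <> ga0 V ->
  (in_I xi ->
     (2 <= #|` supp xi|)%N /\
     (exists vs : seq V,
        xi = gasum [seq pf1 v | v <- vs] /\ (size vs <= #|` supp xi|)%N) /\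
     (0%R \in supp xi ->
        exists vs : seq V,
          xi = gasum [seq pf1 v | v <- vs] /\ (size vs <= #|` supp xi| - 1)%N))
  /\
  (in_I xi -> eps1 xi = 0%R ->
     (4 <= #|` supp xi|)%N /\
     (exists uv : seq (V * V),
        xi = gasum [seq pf2 p.1 p.2 | p <- uv] /\ (size uv <= #|` supp xi| - 2)%N) /\
     (0%R \in supp xi ->
        exists uv : seq (V * V),
          xi = gasum [seq pf2 p.1 p.2 | p <- uv] /\ (size uv <= #|` supp xi| - 3)%N)).
Proof.
rewrite /supp => xi_neq0; split=> [xiI | xiI xi_eps1].
  have [vs xiE size_vs] := pf1_decomposition xiI.
  split; first exact: in_I_card_ge2.
  by split=> [|zero_in]; exists vs; split=> //; rewrite -size_vs ?zero_in; lia.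
have [uv xiE size_uv] := pf2_decomposition xi_neq0 xiI xi_eps1.
split; first exact: in_I_eps1_card_ge4.
by split=> [|zero_in]; exists uv; split=> //; rewrite -size_uv ?zero_in; lia.
Qed.
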